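(* Let $X$ be a space, let $Y$ be an extension of $X$ with compact remainder, let $\zeta Y$ be a compactification of $Y$, and let $\phi:\beta X\to\zeta Y$ be the continuous extension of the identity of $X$. Then $Y$ is realcompact (i.e. $Y\in\mathscr{R}(X)$) if and only if $\mathrm{cl}_{\beta X}(\upsilon X\setminus X)\subseteq\phi^{-1}[Y\setminus X]$.
   Context: All spaces are completely regular Hausdorff. $\beta X$ is the Stone–Čech compactification and $\upsilon X\subseteq\beta X$ the Hewitt realcompactification of $X$. An extension of $X$ is a space containing $X$ as a dense subspace; its remainder is $Y\setminus X$. A space is realcompact if it is homeomorphic to a closed subspace of a power of $\mathbb{R}$. $\mathscr{R}(X)$ is the set of realcompact extensions of $X$ with compact remainder. *)

From Stdlib Require Import Reals List.
Open Scope R_scope.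

Record space : Type := Space { carrier :> Type; opens : (carrier -> Prop) -> Prop }.
Arguments opens {s} _.

Definition is_topology (X : space) : Prop :=
  opens (fun _ : X => True) /\
  (forall U V : X -> Prop, opens U -> opens V -> opens (fun x => U x /\ V x)) /\
  (forall (I : Type) (F : I -> X -> Prop), (forall i, opens (F i)) ->
      opens (fun x => exists i, F i x)).

Definition continuous {X Y : space} (f : X -> Y) : Prop :=
  forall V : Y -> Prop, opens V -> opens (fun x => V (f x)).

Definition closed {X : space} (A : X -> Prop) : Prop := opens (fun x => ~ A x).

Definition closure {X : space} (A : X -> Prop) (p : X) : Prop :=
  forall U : X -> Prop, opens U -> U p -> exists q, U q /\ A q.

Definition dense {X : space} (A : X -> Prop) : Prop := forall p : X, closure A p.

Definition image {X Y : Type} (f : X -> Y) (y : Y) : Prop := exists x, y = f x.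

Definition hausdorff (X : space) : Prop :=
  forall x y : X, x <> y -> exists U V : X -> Prop,
    opens U /\ opens V /\ U x /\ V y /\ (forall z, ~ (U z /\ V z)).

Definition R_space : space :=
  Space R (fun U => forall x, U x -> exists eps, 0 < eps /\
                      forall y, Rabs (y - x) < eps -> U y).

Definition completely_regular (X : space) : Prop :=
  forall (F : X -> Prop) (x : X), closed F -> ~ F x ->
    exists f : X -> R_space, continuous f /\ f x = 0 /\ (forall y, F y -> f y = 1).

(* "space" = completely regular Hausdorff space *)
Definition tychonoff (X : space) : Prop :=
  is_topology X /\ hausdorff X /\ completely_regular X.

Definition compact (X : space) : Prop :=
  forall (I : Type) (U : I -> X -> Prop), (forall i, opens (U i)) ->
    (forall x, exists i, U i x) ->
    exists l : list I, forall x, exists i, In i l /\ U i x.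

Definition subspace (X : space) (A : X -> Prop) : space :=
  Space {x : X | A x}
    (fun U => exists V : X -> Prop, opens V /\ forall a, U a <-> V (proj1_sig a)).

Definition embedding {X Y : space} (f : X -> Y) : Prop :=
  (forall x y, f x = f y -> x = y) /\ continuous f /\
  (forall U : X -> Prop, opens U -> exists V : Y -> Prop, opens V /\ forall x, U x <-> V (f x)).

Definition extension (X Y : space) (e : X -> Y) : Prop :=
  is_topology Y /\ embedding e /\ dense (image e).

Definition compactification (X K : space) (e : X -> K) : Prop :=
  extension X K e /\ compact K /\ hausdorff K.

Definition compact_remainder (X Y : space) (e : X -> Y) : Prop :=
  compact (subspace Y (fun y => ~ image e y)).

Definition R_power (I : Type) : space :=
  Space (I -> R) (fun U => forall f, U f -> exists (l : list I) (eps : R), 0 < eps /\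
          forall g, (forall i, In i l -> Rabs (g i - f i) < eps) -> U g).

Definition realcompact (Y : space) : Prop :=
  exists (I : Type) (h : Y -> R_power I), embedding h /\ closed (image h).

(* (B, eb) is the Stone-Cech compactification of X (characterized, up to
   equivalence, by its universal property). *)
Definition stone_cech (X B : space) (eb : X -> B) : Prop :=
  compactification X B eb /\
  forall (K : space) (f : X -> K), is_topology K -> compact K -> hausdorff K ->
    continuous f -> exists g : B -> K, continuous g /\ forall x, g (eb x) = f x.

(* Hewitt realcompactification inside beta X: the points p of beta X such that
   every continuous f : X -> R extends continuously over X u {p}. *)
Definition hewitt_pt (X B : space) (eb : X -> B) (p : B) : Prop :=
  forall f : X -> R_space, continuous f ->
    exists g : subspace B (fun q => q = p \/ image eb q) -> R_space,
      continuous g /\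
      forall x (hx : eb x = p \/ image eb (eb x)), g (exist _ (eb x) hx) = f x.

(* Both directions compare a point q of beta X with the cluster values at q of images of
   points of X.  If h embeds Y as a closed subset of R^I and q lies in vX, every coordinate of
   h on X extends over q, so h(x) converges to a point of the closed set h[Y], say h(y), as x
   tends to q; then phi(q) = y.  As phi has singleton fibres over X, phi maps vX \ X into
   Y \ X, and so does its closure since Y \ X is compact.
   Conversely, embed Y into R^C(Y) by evaluation.  By compactness of beta X, a point r in the
   closure of the image is a cluster value of the evaluations at x as x tends to some q.  If
   phi(q) is a point y of Y, then r is the evaluation at y.  Otherwise q is not in vX, so some
   f in C(X) is unbounded near q; multiplied by a cutoff vanishing near the compact remainder,
   f becomes some g in C(Y) that agrees with f near q, and the g-coordinate of r would have to
   be infinite. *)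

From Stdlib Require Import Reals List Lra Classical ClassicalEpsilon
  FunctionalExtensionality PropExtensionality.
Open Scope R_scope.

Lemma opens_ext (X : space) (U V : X -> Prop) :
  opens U -> (forall x, U x <-> V x) -> opens V.
Proof.
  intros HU HUV. replace V with U; [exact HU|].
  apply functional_extensionality; intro x; apply propositional_extensionality, HUV.
Qed.

Section Topology.
Variables (X : space) (TX : is_topology X).

Lemma opens_True : opens (fun _ : X => True).
Proof. exact (proj1 TX). Qed.

Lemma opens_and (U V : X -> Prop) : opens U -> opens V -> opens (fun x => U x /\ V x).
Proof. exact (proj1 (proj2 TX) U V). Qed.

Lemma opens_exists (I : Type) (F : I -> X -> Prop) :
  (forall i, opens (F i)) -> opens (fun x => exists i, F i x).
Proof. exact (proj2 (proj2 TX) I F). Qed.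

Lemma opens_Exists_list {A : Type} (l : list A) (F : A -> X -> Prop) :
  (forall a, In a l -> opens (F a)) -> opens (fun x => exists a, In a l /\ F a x).
Proof.
  intros HF. apply (opens_ext X (fun x => exists s : {a | In a l}, F (proj1_sig s) x)).
  - apply opens_exists. intros [a Ha]; exact (HF a Ha).
  - intro x; split.
    + intros [[a Ha] Hx]; exists a; auto.
    + intros [a [Ha Hx]]; exists (exist _ a Ha); auto.
Qed.

Lemma opens_Forall_list {A : Type} (l : list A) (F : A -> X -> Prop) :
  (forall a, In a l -> opens (F a)) -> opens (fun x => forall a, In a l -> F a x).
Proof.
  induction l as [|a l IH]; intros HF.
  - apply (opens_ext X (fun _ => True)); [exact opens_True|]. intro x; simpl; tauto.
  - apply (opens_ext X (fun x => F a x /\ forall b, In b l -> F b x)).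
    + apply opens_and; [apply HF; simpl; auto|apply IH; intros; apply HF; simpl; auto].
    + intro x; simpl; split; [intros [Ha Hl] b [<-|Hb]; auto|intros H; split; auto].
Qed.

Lemma opens_local (U : X -> Prop) :
  (forall x, U x -> exists V, opens V /\ V x /\ forall y, V y -> U y) -> opens U.
Proof.
  intros HU.
  destruct (choice (fun (s : {x | U x}) V => opens V /\ V (proj1_sig s) /\ forall y, V y -> U y))
    as [F HF].
  { intros [x Hx]; exact (HU x Hx). }
  apply (opens_ext X (fun x => exists s, F s x)).
  - apply opens_exists; intro s; apply HF.
  - intro x; split.
    + intros [s Hs]; exact (proj2 (proj2 (HF s)) x Hs).
    + intro Hx; exists (exist _ x Hx); apply (HF (exist _ x Hx)).
Qed.

Lemma closed_of_closure (A : X -> Prop) : (forall p, closure A p -> A p) -> closed A.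
Proof.
  intros HA. apply opens_local. intros p Hp.
  apply NNPP; intro Hno. apply Hp, HA. intros U HU Up.
  apply NNPP; intro Hq. apply Hno. exists U; repeat split; auto.
  intros q Uq Aq; apply Hq; eauto.
Qed.

Lemma closure_closed (A : X -> Prop) p : closed A -> closure A p -> A p.
Proof. intros HA Hp. apply NNPP; intro Hn. destruct (Hp _ HA Hn) as [q [Hq Aq]]; auto. Qed.

Lemma closure_of (A : X -> Prop) p : A p -> closure A p.
Proof. intros Ap U _ Up; exists p; auto. Qed.

Lemma hausdorff_closed_singleton (x0 : X) : hausdorff X -> closed (fun x => x = x0).
Proof.
  intros HX. apply opens_local. intros x Hx.
  destruct (HX x x0 Hx) as [U [V [HU [HV [Ux [Vx0 Hdis]]]]]].
  exists U; repeat split; auto. intros y Uy ->. exact (Hdis x0 (conj Uy Vx0)).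
Qed.

End Topology.

Lemma continuous_comp (X Y Z : space) (f : X -> Y) (g : Y -> Z) :
  continuous f -> continuous g -> continuous (fun x => g (f x)).
Proof. intros Hf Hg V HV. exact (Hf _ (Hg _ HV)). Qed.

Lemma continuous_proj1_sig (Y : space) (A : Y -> Prop) :
  continuous (fun s : subspace Y A => proj1_sig s).
Proof. intros V HV. exists V; split; auto; tauto. Qed.

Lemma subspace_top (Y : space) (A : Y -> Prop) : is_topology Y -> is_topology (subspace Y A).
Proof.
  intros TY. split; [|split].
  - exists (fun _ => True); split; [exact (opens_True Y TY)|tauto].
  - intros U V [U' [HU' EU]] [V' [HV' EV]]. exists (fun y => U' y /\ V' y); split.
    + exact (opens_and Y TY _ _ HU' HV').
    + intro a; rewrite EU, EV; tauto.
  - intros I F HF.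
    destruct (choice (fun i V => opens V /\ forall a, F i a <-> V (proj1_sig a)) HF) as [G HG].
    exists (fun y => exists i, G i y); split.
    + apply opens_exists; auto. intro i; apply HG.
    + intro a; split; intros [i Hi]; exists i; apply (HG i); auto.
Qed.

Definition initial {X Y : space} (e : X -> Y) : Prop :=
  forall U : X -> Prop, opens U -> exists V : Y -> Prop, opens V /\ forall x, U x <-> V (e x).

Lemma initial_comp (X Y Z : space) (e : X -> Y) (f : Y -> Z) :
  initial e -> initial f -> initial (fun x => f (e x)).
Proof.
  intros He Hf U HU. destruct (He U HU) as [V [HV EV]]. destruct (Hf V HV) as [W [HW EW]].
  exists W; split; auto. intro x; rewrite EV, EW; tauto.
Qed.

Lemma separate_point_compact (Y Z : space) (e : Y -> Z) (A : Y -> Prop) (z : Z) :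
  is_topology Z -> hausdorff Z -> continuous e -> compact (subspace Y A) ->
  (forall a, A a -> e a <> z) ->
  exists W1 W2, opens W1 /\ opens W2 /\ W1 z /\ (forall a, A a -> W2 (e a)) /\
    forall u, ~ (W1 u /\ W2 u).
Proof.
  intros TZ HZ He HA Hz.
  destruct (choice (fun (s : {a | A a}) (P : (Z -> Prop) * (Z -> Prop)) =>
     opens (fst P) /\ opens (snd P) /\ fst P z /\ snd P (e (proj1_sig s)) /\
     forall u, ~ (fst P u /\ snd P u))) as [P HP].
  { intros [a Ha]. destruct (HZ z (e a)) as [U [V HUV]].
    - intro E; exact (Hz a Ha (eq_sym E)).
    - exists (U, V); exact HUV. }
  destruct (HA {a | A a} (fun s t => snd (P s) (e (proj1_sig t)))) as [l Hl].
  - intro s. exists (fun y => snd (P s) (e y)); split; [apply He, HP|tauto].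
  - intro t. exists t. apply HP.
  - exists (fun u => forall s, In s l -> fst (P s) u), (fun u => exists s, In s l /\ snd (P s) u).
    repeat split.
    + apply opens_Forall_list; auto. intros; apply HP.
    + apply opens_Exists_list; auto. intros; apply HP.
    + intros s _; apply HP.
    + intros a Ha. destruct (Hl (exist _ a Ha)) as [s [Hs H]]. exists s; auto.
    + intros u [H1 [s [Hs H2]]]. exact (proj2 (proj2 (proj2 (proj2 (HP s)))) u (conj (H1 s Hs) H2)).
Qed.

Lemma image_open_of_compact_remainder (X Y : space) (e : X -> Y) :
  is_topology Y -> hausdorff Y -> compact_remainder X Y e -> opens (image e).
Proof.
  intros TY HY HK. apply opens_local; auto. intros y [x ->].
  destruct (separate_point_compact Y Y (fun y => y) (fun y => ~ image e y) (e x) TY HY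
              (fun V HV => HV) HK) as [W1 [W2 [HW1 [_ [W1x [HKW2 Hdis]]]]]].
  { intros a Ha E; apply Ha; exists x; auto. }
  exists W1; repeat split; auto. intros y Hy.
  apply NNPP; intro Hn. exact (Hdis y (conj Hy (HKW2 y Hn))).
Qed.

Notation contR f := (@continuous _ R_space f).

Lemma Rabs_center (a eps : R) : 0 < eps -> Rabs (a - a) < eps.
Proof. rewrite Rminus_diag, Rabs_R0; auto. Qed.

Lemma opens_ball (c eps : R) : @opens R_space (fun t => Rabs (t - c) < eps).
Proof.
  intros t Ht. exists (eps - Rabs (t - c)); split; [lra|].
  intros s Hs. pose proof (Rabs_triang (s - t) (t - c)).
  replace (s - t + (t - c)) with (s - c) in H by ring. lra.
Qed.

Lemma opens_gt (c : R) : @opens R_space (fun t => c < t).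
Proof.
  intros t Ht. exists (t - c); split; [lra|].
  intros s. unfold Rabs; destruct Rcase_abs; lra.
Qed.

Lemma opens_lt (c : R) : @opens R_space (fun t => t < c).
Proof.
  intros t Ht. exists (c - t); split; [lra|].
  intros s. unfold Rabs; destruct Rcase_abs; lra.
Qed.

Lemma R_top : is_topology R_space.
Proof.
  split; [|split].
  - intros t _; exists 1; split; [lra|auto].
  - intros U V HU HV t [Ut Vt].
    destruct (HU t Ut) as [e1 [He1 H1]]; destruct (HV t Vt) as [e2 [He2 H2]].
    exists (Rmin e1 e2); split; [apply Rmin_pos; auto|].
    intros s Hs; pose proof (Rmin_l e1 e2); pose proof (Rmin_r e1 e2).
    split; [apply H1|apply H2]; lra.
  - intros I F HF t [i Hi]. destruct (HF i t Hi) as [e [He H]].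
    exists e; split; auto. intros s Hs; exists i; auto.
Qed.

Lemma contR_ball (X : space) (f : X -> R) (c eps : R) :
  contR f -> opens (fun x => Rabs (f x - c) < eps).
Proof. intros Hf. exact (Hf _ (opens_ball c eps)). Qed.

Lemma hausdorff_of_separating (T : space) :
  (forall a b : T, a <> b -> exists p : T -> R, contR p /\ p a <> p b) -> hausdorff T.
Proof.
  intros Hsep a b Hab. destruct (Hsep a b Hab) as [p [Hp Hpab]].
  set (d := Rabs (p a - p b) / 2).
  assert (Hd : 0 < d) by (assert (0 < Rabs (p a - p b)) by (apply Rabs_pos_lt; lra); unfold d; lra).
  exists (fun t => Rabs (p t - p a) < d), (fun t => Rabs (p t - p b) < d).
  repeat split; try apply contR_ball; try apply Rabs_center; auto.
  intros t [Ha Hb]. rewrite Rabs_minus_sym in Ha.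
  pose proof (Rabs_triang (p a - p t) (p t - p b)).
  replace (p a - p t + (p t - p b)) with (p a - p b) in H by ring. unfold d in *; lra.
Qed.

Lemma continuity_pt_ident (t : R) : continuity_pt (fun s => s) t.
Proof. apply derivable_continuous_pt, derivable_pt_id. Qed.

Lemma continuity_pt_cst (c t : R) : continuity_pt (fun _ => c) t.
Proof. apply continuity_pt_const; intros u v; reflexivity. Qed.

Section RealFunctions.
Variables (X : space) (TX : is_topology X).

Lemma contR_intro (f : X -> R) :
  (forall x eps, 0 < eps ->
     exists U, opens U /\ U x /\ forall y, U y -> Rabs (f y - f x) < eps) ->
  contR f.
Proof.
  intros H V HV. apply opens_local; auto. intros x Vx.
  destruct (HV _ Vx) as [eps [Heps Hb]].
  destruct (H x eps Heps) as [U [HU [Ux HUy]]].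
  exists U; repeat split; auto.
Qed.

Lemma contR_ext (f g : X -> R) : contR f -> (forall x, f x = g x) -> contR g.
Proof. intros Hf E. replace g with f; auto. apply functional_extensionality, E. Qed.

Lemma contR_const (c : R) : contR (fun _ : X => c).
Proof.
  apply contR_intro. intros x eps He. exists (fun _ => True); repeat split.
  - exact (opens_True X TX).
  - intros; apply Rabs_center; auto.
Qed.

Lemma contR_comp_pt (op : R -> R) (f : X -> R) :
  (forall x, continuity_pt op (f x)) -> contR f -> contR (fun x => op (f x)).
Proof.
  intros Hop Hf. apply contR_intro. intros x eps Heps.
  destruct (Hop x eps Heps) as [d [Hd Hd']].
  exists (fun y => Rabs (f y - f x) < d); repeat split.
  - apply contR_ball, Hf.
  - apply Rabs_center; auto.
  - intros y Hy. destruct (Req_dec (f x) (f y)) as [E|Hne].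
    + rewrite E; apply Rabs_center; auto.
    + apply (Hd' (f y)). split; [split; [exact I|exact Hne]|exact Hy].
Qed.

Lemma contR_op2 (op : R -> R -> R) (f g : X -> R) :
  (forall a b eps, 0 < eps -> exists d, 0 < d /\ forall a' b',
     Rabs (a' - a) < d -> Rabs (b' - b) < d -> Rabs (op a' b' - op a b) < eps) ->
  contR f -> contR g -> contR (fun x => op (f x) (g x)).
Proof.
  intros Hop Hf Hg. apply contR_intro. intros x eps Heps.
  destruct (Hop (f x) (g x) eps Heps) as [d [Hd Hd']].
  exists (fun y => Rabs (f y - f x) < d /\ Rabs (g y - g x) < d); repeat split.
  - apply opens_and; auto; apply contR_ball; auto.
  - apply Rabs_center; auto.
  - apply Rabs_center; auto.
  - intros y [H1 H2]; auto.
Qed.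

Lemma contR_plus (f g : X -> R) : contR f -> contR g -> contR (fun x => f x + g x).
Proof.
  apply contR_op2. intros a b eps He. exists (eps / 2); split; [lra|].
  intros a' b' H1 H2. pose proof (Rabs_triang (a' - a) (b' - b)).
  replace (a' - a + (b' - b)) with (a' + b' - (a + b)) in H by ring. lra.
Qed.

Lemma contR_minus (f g : X -> R) : contR f -> contR g -> contR (fun x => f x - g x).
Proof.
  apply contR_op2. intros a b eps He. exists (eps / 2); split; [lra|].
  intros a' b' H1 H2. pose proof (Rabs_triang (a' - a) (- (b' - b))).
  rewrite Rabs_Ropp in H. replace (a' - a + - (b' - b)) with (a' - b' - (a - b)) in H by ring. lra.
Qed.

Lemma continuity_pt_scale (c t : R) : continuity_pt (fun s => c * s) t.
Proof. apply (continuity_pt_mult (fun _ => c) (fun s => s)); auto using continuity_pt_ident, continuity_pt_cst. Qed.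

Lemma contR_scale (c : R) (f : X -> R) : contR f -> contR (fun x => c * f x).
Proof. apply (contR_comp_pt (fun s => c * s)); intro; apply continuity_pt_scale. Qed.

Lemma contR_abs (f : X -> R) : contR f -> contR (fun x => Rabs (f x)).
Proof. apply contR_comp_pt; intro; apply Rcontinuity_abs. Qed.

(* Polarization: [f g = ((f + g)^2 - (f - g)^2) / 4]. *)
Lemma contR_mult (f g : X -> R) : contR f -> contR g -> contR (fun x => f x * g x).
Proof.
  intros Hf Hg.
  assert (Hsq : forall h : X -> R, contR h -> contR (fun x => h x * h x)).
  { intros h Hh. apply (contR_comp_pt (fun s => s * s)); [|exact Hh]. intro.
    apply (continuity_pt_mult (fun s => s) (fun s => s)); apply continuity_pt_ident. }
  apply (contR_ext (fun x => / 4 * ((f x + g x) * (f x + g x) - (f x - g x) * (f x - g x)))).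
  - apply contR_scale, contR_minus; apply Hsq; [apply contR_plus|apply contR_minus]; auto.
  - intro x; field.
Qed.

Lemma contR_min (f g : X -> R) : contR f -> contR g -> contR (fun x => Rmin (f x) (g x)).
Proof.
  intros Hf Hg.
  apply (contR_ext (fun x => / 2 * (f x + g x - Rabs (f x - g x)))).
  - apply contR_scale, contR_minus; [apply contR_plus|apply contR_abs, contR_minus]; auto.
  - intro x. unfold Rmin; destruct Rle_dec; unfold Rabs; destruct Rcase_abs; lra.
Qed.

Lemma contR_max (f g : X -> R) : contR f -> contR g -> contR (fun x => Rmax (f x) (g x)).
Proof.
  intros Hf Hg.
  apply (contR_ext (fun x => / 2 * (f x + g x + Rabs (f x - g x)))).
  - apply contR_scale, contR_plus; [apply contR_plus|apply contR_abs, contR_minus]; auto.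
  - intro x. unfold Rmax; destruct Rle_dec; unfold Rabs; destruct Rcase_abs; lra.
Qed.

End RealFunctions.

Definition squash (t : R) : R := t / (1 + Rabs t).
Definition unsquash (s : R) : R := s / (1 - Rabs s).

Lemma Rabs_squash (t : R) : Rabs (squash t) = Rabs t / (1 + Rabs t).
Proof.
  pose proof (Rabs_pos t). unfold squash, Rdiv.
  rewrite Rabs_mult, Rabs_inv, (Rabs_pos_eq (1 + Rabs t)); lra.
Qed.

Lemma Rabs_squash_lt_1 (t : R) : Rabs (squash t) < 1.
Proof.
  pose proof (Rabs_pos t). rewrite Rabs_squash.
  apply (Rmult_lt_reg_r (1 + Rabs t)); [lra|]. unfold Rdiv. rewrite Rmult_assoc, Rinv_l; lra.
Qed.

Lemma squash_bounds (t : R) : -1 <= squash t <= 1.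
Proof. destruct (Rabs_def2 _ _ (Rabs_squash_lt_1 t)); lra. Qed.

Lemma unsquashK (t : R) : unsquash (squash t) = t.
Proof.
  pose proof (Rabs_pos t). unfold unsquash. rewrite Rabs_squash. unfold squash. field. lra.
Qed.

Lemma squash_Rabs_lt (a b : R) : Rabs (squash a) < Rabs (squash b) -> Rabs a < Rabs b.
Proof.
  rewrite !Rabs_squash. pose proof (Rabs_pos a); pose proof (Rabs_pos b).
  assert (E : forall u, 0 <= u -> u / (1 + u) = 1 - / (1 + u)) by (intros; field; lra).
  rewrite !E by auto. intros H1. apply Rnot_le_lt; intro Hba.
  pose proof (Rinv_le_contravar (1 + Rabs b) (1 + Rabs a) ltac:(lra) ltac:(lra)). lra.
Qed.

Lemma continuity_pt_squash (t : R) : continuity_pt squash t.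
Proof.
  apply (continuity_pt_div (fun s => s) (fun s => 1 + Rabs s)).
  - apply continuity_pt_ident.
  - apply (continuity_pt_plus (fun _ => 1) Rabs); [apply continuity_pt_cst|apply Rcontinuity_abs].
  - pose proof (Rabs_pos t); lra.
Qed.

Lemma continuity_pt_unsquash (s : R) : Rabs s < 1 -> continuity_pt unsquash s.
Proof.
  intros Hs. apply (continuity_pt_div (fun u => u) (fun u => 1 - Rabs u)).
  - apply continuity_pt_ident.
  - apply (continuity_pt_minus (fun _ => 1) Rabs); [apply continuity_pt_cst|apply Rcontinuity_abs].
  - lra.
Qed.

Definition I11 : space := subspace R_space (fun t => -1 <= t <= 1).

Lemma I11_hausdorff : hausdorff I11.
Proof.
  apply hausdorff_of_separating. intros a b Hab.
  exists (fun s => proj1_sig s); split; [apply continuous_proj1_sig|].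
  destruct a as [a Ha], b as [b Hb]; simpl; intros ->.
  apply Hab; f_equal; apply proof_irrelevance.
Qed.

Lemma I11_compact : compact I11.
Proof.
  intros I U HU Hcov.
  assert (H0 : -1 <= 0 <= 1) by lra.
  destruct (Hcov (exist _ 0 H0)) as [i0 _].
  destruct (choice (fun i V => @opens R_space V /\ forall a : I11, U i a <-> V (proj1_sig a)) HU)
    as [V HV].
  set (j := fun c : R =>
         epsilon (inhabits i0) (fun i => forall H : -1 <= c <= 1, U i (exist _ c H))).
  assert (Hj : forall c (H : -1 <= c <= 1), U (j c) (exist _ c H)).
  { intros c H. apply (epsilon_spec (inhabits i0) (fun i => forall H, U i (exist _ c H))).
    destruct (Hcov (exist _ c H)) as [i Hi]. exists i. intros H'.
    replace H' with H by apply proof_irrelevance. exact Hi. }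
  set (fam := fun c x => (-1 <= c <= 1) /\ V (j c) x).
  assert (Hfam : forall c, (exists y, fam c y) -> -1 <= c <= 1) by (intros c [y [Hc _]]; exact Hc).
  destruct (compact_P3 (-1) 1 (mkfamily _ fam Hfam)) as [D [HcovD [l Hl]]].
  - split.
    + intros x Hx. exists x. split; auto. apply (proj2 (HV (j x)) (exist _ x Hx)), Hj.
    + intros c x [Hc Hv]. destruct (proj1 (HV (j c)) x Hv) as [e [He He']].
      exists (mkposreal e He). intros y Hy. split; [exact Hc|]. apply He'. exact Hy.
  - exists (map j l). intros [x Hx].
    destruct (HcovD x Hx) as [c [[Hc Hv] HDc]].
    exists (j c); split.
    + apply in_map, Hl. split; auto.
    + apply (proj2 (HV (j c))). exact Hv.
Qed.

Lemma stone_cech_extend_squash (X B : space) (eb : X -> B) (f : X -> R) :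
  stone_cech X B eb -> is_topology X -> contR f ->
  exists F : B -> R, contR F /\ (forall x, F (eb x) = squash (f x)) /\ (forall q, Rabs (F q) <= 1).
Proof.
  intros [_ HU] TX Hf.
  set (sf := fun x => exist (fun t => -1 <= t <= 1) (squash (f x)) (squash_bounds (f x))
                        : I11).
  assert (Hsf : continuous sf).
  { intros V [V' [HV' E]].
    apply (opens_ext X (fun x => V' (squash (f x)))).
    - exact (contR_comp_pt X TX squash f (fun x => continuity_pt_squash _) Hf _ HV').
    - intro x; rewrite (E (sf x)); tauto. }
  destruct (HU I11 sf (subspace_top _ _ R_top) I11_compact I11_hausdorff Hsf) as [g [Hg Hge]].
  exists (fun q => proj1_sig (g q)); repeat split.
  - exact (continuous_comp _ _ _ g _ Hg (continuous_proj1_sig R_space _)).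
  - intro x; rewrite Hge; reflexivity.
  - intro q; apply Rabs_le, (proj2_sig (g q)).
Qed.

Definition extends_over {X B : space} (eb : X -> B) (f : X -> R) (q : B) : Prop :=
  exists g : subspace B (fun p => p = q \/ image eb p) -> R_space, continuous g /\
    forall x (hx : eb x = q \/ image eb (eb x)), g (exist _ (eb x) hx) = f x.

Lemma not_extends_over_unbounded (X B : space) (eb : X -> B) (f : X -> R) (q : B) :
  stone_cech X B eb -> is_topology X -> contR f -> ~ extends_over eb f q ->
  forall M, exists W, opens W /\ W q /\ forall x, W (eb x) -> M < Rabs (f x).
Proof.
  intros HS TX Hf Hnot M.
  assert (TB : is_topology B) by (destruct HS as [[[TB _] _] _]; exact TB).
  destruct (stone_cech_extend_squash X B eb f HS TX Hf) as [F [HF [HFe HF1]]].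
  assert (HFq : Rabs (F q) = 1).
  { destruct (Rle_lt_or_eq_dec _ _ (HF1 q)) as [Hlt|]; auto. exfalso; apply Hnot.
    set (S := fun p => p = q \/ image eb p).
    exists (fun s : subspace B S => unsquash (F (proj1_sig s))); split.
    - apply (contR_comp_pt _ (subspace_top B S TB) unsquash (fun s => F (proj1_sig s))).
      + intros [p [->|[x ->]]]; apply continuity_pt_unsquash; simpl; [exact Hlt|].
        rewrite HFe; apply Rabs_squash_lt_1.
      + exact (continuous_comp _ _ _ _ _ (continuous_proj1_sig B S) HF).
    - intros x hx; simpl; rewrite HFe; apply unsquashK. }
  exists (fun p => Rabs (squash M) < Rabs (F p)); repeat split.
  - exact (contR_abs B TB F HF _ (opens_gt _)).
  - rewrite HFq; apply Rabs_squash_lt_1.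
  - intros x Hx. rewrite HFe in Hx. apply squash_Rabs_lt in Hx. pose proof (Rle_abs M); lra.
Qed.

Lemma R_power_top (I : Type) : is_topology (R_power I).
Proof.
  split; [|split].
  - intros v _. exists nil, 1; split; [lra|auto].
  - intros U V HU HV v [Uv Vv].
    destruct (HU v Uv) as [l1 [e1 [He1 H1]]]. destruct (HV v Vv) as [l2 [e2 [He2 H2]]].
    exists (l1 ++ l2), (Rmin e1 e2); split; [apply Rmin_pos; auto|].
    pose proof (Rmin_l e1 e2); pose proof (Rmin_r e1 e2).
    intros w Hw; split; [apply H1|apply H2]; intros i Hi;
      (assert (In i (l1 ++ l2)) by (apply in_or_app; auto)); specialize (Hw i H3); lra.
  - intros J F HF v [j Hj]. destruct (HF j v Hj) as [l [e [He H]]].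
    exists l, e; split; auto. intros w Hw; exists j; auto.
Qed.

Lemma R_power_proj_continuous (I : Type) (i : I) : contR (fun v : R_power I => v i).
Proof.
  intros V HV v Hv. destruct (HV _ Hv) as [e [He He']].
  exists (i :: nil), e; split; auto. intros w Hw. apply He', Hw; simpl; auto.
Qed.

Lemma R_power_hausdorff (I : Type) : hausdorff (R_power I).
Proof.
  apply hausdorff_of_separating. intros v w Hvw.
  destruct (not_all_ex_not _ _ (fun H => Hvw (functional_extensionality v w H))) as [i Hi].
  exists (fun u => u i); split; [apply R_power_proj_continuous|exact Hi].
Qed.

Lemma continuous_into_R_power (Y : space) (I : Type) (F : Y -> R_power I) :
  is_topology Y -> (forall i, contR (fun y => F y i)) -> continuous F.
Proof.
  intros TY HF V HV. apply opens_local; auto. intros y Vy.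
  destruct (HV _ Vy) as [l [e [He Hb]]].
  exists (fun y' => forall i, In i l -> Rabs (F y' i - F y i) < e); repeat split.
  - apply opens_Forall_list; auto. intros i _. apply contR_ball, HF.
  - intros i _. apply Rabs_center; auto.
  - intros y' Hy'. apply Hb, Hy'.
Qed.

Definition tends {A : Type} {B T : space} (eb : A -> B) (F : A -> T) (q : B) (t : T) : Prop :=
  forall V, opens V -> V t -> exists W, opens W /\ W q /\ forall a, W (eb a) -> V (F a).

(* [(s, t)] lies in the closure of [{(f a, g a)}] in [S x T]. *)
Definition clusters {A : Type} {S T : space} (f : A -> S) (g : A -> T) (s : S) (t : T) : Prop :=
  forall U V, opens U -> opens V -> U s -> V t -> exists a, U (f a) /\ V (g a).

Lemma extends_over_tends (X B : space) (eb : X -> B) (f : X -> R) (q : B) :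
  extends_over eb f q -> exists t, @tends _ _ R_space eb f q t.
Proof.
  intros [g [Hg Hge]]. set (sq := exist (fun p => p = q \/ image eb p) q (or_introl eq_refl)).
  exists (g sq). intros V HV Vt. destruct (Hg V HV) as [W [HW EW]].
  exists W; repeat split; auto.
  - exact (proj1 (EW sq) Vt).
  - intros x Wx. rewrite <- (Hge x (or_intror (ex_intro _ x eq_refl))). apply EW; exact Wx.
Qed.

Lemma tends_R_power {A : Type} {B : space} (I : Type) (eb : A -> B) (F : A -> R_power I)
  (q : B) (t : R_power I) :
  is_topology B -> (forall i, @tends _ _ R_space eb (fun a => F a i) q (t i)) -> tends eb F q t.
Proof.
  intros TB HF V HV Vt. destruct (HV t Vt) as [l [e [He Hb]]].
  destruct (choice (fun i W => opens W /\ W q /\ forall a, W (eb a) -> Rabs (F a i - t i) < e))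
    as [W HW].
  { intro i. apply (HF i (fun s => Rabs (s - t i) < e));
      [apply opens_ball|apply Rabs_center; auto]. }
  exists (fun b => forall i, In i l -> W i b); repeat split.
  - apply opens_Forall_list; auto. intros i _; apply HW.
  - intros i _; apply HW.
  - intros a Ha. apply Hb. intros i Hi. apply (HW i), Ha, Hi.
Qed.

Lemma clusters_of_tends {A : Type} {B T : space} (eb : A -> B) (F : A -> T) q t :
  is_topology B -> dense (image eb) -> tends eb F q t -> clusters eb F q t.
Proof.
  intros TB HD Ht U V HU HV Uq Vt. destruct (Ht V HV Vt) as [W [HW [Wq HWV]]].
  destruct (HD q (fun b => U b /\ W b) (opens_and B TB _ _ HU HW) (conj Uq Wq))
    as [_ [[Ua Wa] [a ->]]].
  exists a; auto.
Qed.

Lemma clusters_sym {A : Type} {S T : space} (f : A -> S) (g : A -> T) s t :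
  clusters f g s t -> clusters g f t s.
Proof. intros Hc U V HU HV Ut Vs. destruct (Hc V U HV HU Vs Ut) as [a [Va Ua]]; eauto. Qed.

Lemma clusters_unique {A S T : space} (f : A -> S) (g : A -> T) a t :
  hausdorff T -> continuous g -> initial f -> clusters f g (f a) t -> t = g a.
Proof.
  intros HT Hg Hf Hc. apply NNPP; intro Hne.
  destruct (HT t (g a) Hne) as [V [V' [HV [HV' [Vt [V'a Hdis]]]]]].
  destruct (Hf _ (Hg V' HV')) as [U [HU EU]].
  destruct (Hc U V HU HV (proj1 (EU a) V'a) Vt) as [a' [Ua' Va']].
  exact (Hdis (g a') (conj Va' (proj2 (EU a') Ua'))).
Qed.

Lemma clusters_push (X Y Z B T : space) (eY : X -> Y) (eZ : Y -> Z) (eb : X -> B)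
  (phi : B -> Z) (H : Y -> T) q t :
  continuous phi -> (forall x, phi (eb x) = eZ (eY x)) ->
  clusters eb (fun x => H (eY x)) q t -> clusters eZ H (phi q) t.
Proof.
  intros Hphi Hpe Hc W V HW HV Wq Vt.
  destruct (Hc _ V (Hphi W HW) HV Wq Vt) as [x [Wx Vx]].
  exists (eY x). rewrite <- Hpe. auto.
Qed.

Lemma compact_directed_cluster (B : space) (K : Type) (S : K -> B -> Prop) (k0 : K) :
  compact B -> (forall k, exists b, S k b) ->
  (forall k1 k2, exists k, forall b, S k b -> S k1 b /\ S k2 b) ->
  exists q, forall k, closure (S k) q.
Proof.
  intros HB Hne Hdir. apply NNPP; intro Hno.
  assert (Hsep : forall q, exists kU : K * (B -> Prop),
             opens (snd kU) /\ snd kU q /\ forall b, snd kU b -> ~ S (fst kU) b).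
  { intro q. apply NNPP; intro Hq. apply Hno. exists q. intros k U HU Uq.
    apply NNPP; intro Hb. apply Hq. exists (k, U); simpl; repeat split; auto.
    intros b Ub Sb; apply Hb; eauto. }
  destruct (choice _ Hsep) as [kU HkU].
  destruct (HB B (fun q => snd (kU q))) as [qs Hqs].
  - intro q; apply HkU.
  - intro b; exists b; apply HkU.
  - assert (Hlow : forall l : list B,
               exists k, forall b, S k b -> forall q, In q l -> S (fst (kU q)) b).
    { induction l as [|q l [k Hk]].
      - exists k0; intros b _ q [].
      - destruct (Hdir (fst (kU q)) k) as [k' Hk']. exists k'.
        intros b Hb q' [<-|Hq']; [apply Hk', Hb|exact (Hk b (proj2 (Hk' b Hb)) q' Hq')]. }
    destruct (Hlow qs) as [k Hk]. destruct (Hne k) as [b Hb].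
    destruct (Hqs b) as [q [Hq Ub]]. exact (proj2 (proj2 (HkU q)) b Ub (Hk b Hb q Hq)).
Qed.

Lemma closure_image_cluster (X Y B T : space) (eY : X -> Y) (eb : X -> B) (H : Y -> T) (t : T) :
  is_topology T -> compact B -> dense (image eY) -> continuous H -> closure (image H) t ->
  exists q, clusters eb (fun x => H (eY x)) q t.
Proof.
  intros TT HB HD HH Ht.
  set (K := {V : T -> Prop | opens V /\ V t}).
  destruct (compact_directed_cluster B K
              (fun k b => exists x, b = eb x /\ proj1_sig k (H (eY x)))
              (exist _ (fun _ => True) (conj (opens_True T TT) I)) HB) as [q Hq].
  - intros [V [HV Vt]]. destruct (Ht V HV Vt) as [s [Vs [y ->]]].
    destruct (HD y (fun y' => V (H y')) (HH V HV) Vs) as [_ [Vx [x ->]]].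
    exists (eb x), x; auto.
  - intros [V1 [HV1 V1t]] [V2 [HV2 V2t]].
    exists (exist _ (fun s => V1 s /\ V2 s) (conj (opens_and T TT _ _ HV1 HV2) (conj V1t V2t))).
    intros b [x [-> [H1 H2]]]; split; eauto.
  - exists q. intros W V HW HV Wq Vt.
    destruct (Hq (exist _ V (conj HV Vt)) W HW Wq) as [b [Wb [x [-> Vx]]]].
    exists x; auto.
Qed.

Definition cont_funs (Y : space) : Type := {g : Y -> R | contR g}.

Definition evaluation (Y : space) (y : Y) : R_power (cont_funs Y) := fun g => proj1_sig g y.

Lemma evaluation_embedding (Y : space) : tychonoff Y -> embedding (evaluation Y).
Proof.
  intros [TY [HY CRY]]. split; [|split].
  - intros y1 y2 E. apply NNPP; intro Hne.
    destruct (CRY _ y1 (hausdorff_closed_singleton Y TY y2 HY) Hne) as [f [Hf [H0 H1]]].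
    pose proof (equal_f E (exist _ f Hf)) as E'. unfold evaluation in E'; simpl in E'.
    rewrite H0, H1 in E' by reflexivity. lra.
  - apply continuous_into_R_power; auto. intros [g Hg]; exact Hg.
  - intros U HU.
    exists (fun v : R_power (cont_funs Y) => exists g : cont_funs Y,
              (forall y, ~ U y -> proj1_sig g y = 1) /\ Rabs (v g) < 1/2).
    split.
    + intros v [g [Hg Hv]]. exists (g :: nil), (1/2 - Rabs (v g)); split; [lra|].
      intros w Hw. exists g; split; auto. specialize (Hw g (or_introl eq_refl)).
      pose proof (Rabs_triang (w g - v g) (v g)). replace (w g - v g + v g) with (w g) in H by ring.
      lra.
    + intro y; split.
      * intro Uy. destruct (CRY (fun y => ~ U y) y) as [f [Hf [H0 H1]]].
        { apply (opens_ext Y U); auto. intro; tauto. }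
        { tauto. }
        exists (exist _ f Hf); split; auto. unfold evaluation; simpl. rewrite H0, Rabs_R0; lra.
      * intros [g [Hg Hv]]. apply NNPP; intro Hn. unfold evaluation in Hv.
        rewrite (Hg y Hn), Rabs_R1 in Hv. lra.
Qed.

Lemma compactification_map_fiber (X Y Z B : space) (eY : X -> Y) (eZ : Y -> Z) (eb : X -> B)
  (phi : B -> Z) (q : B) (x0 : X) :
  initial eY -> initial eZ -> stone_cech X B eb -> continuous phi ->
  (forall x, phi (eb x) = eZ (eY x)) -> phi q = eZ (eY x0) -> q = eb x0.
Proof.
  intros HeY HeZ [[[TB [[_ [Heb _]] DB]] [_ HB]] _] Hphi Hpe Hq.
  apply (clusters_unique (fun x => eZ (eY x)) eb x0 q HB Heb (initial_comp _ _ _ _ _ HeY HeZ)).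
  rewrite <- Hq. intros W V HW HV Wq Vq.
  destruct (DB q (fun b => V b /\ W (phi b)) (opens_and B TB _ _ HV (Hphi W HW)) (conj Vq Wq))
    as [_ [[Vb Wb] [x ->]]].
  exists x. rewrite <- Hpe. auto.
Qed.

Section Cutoff.
Variables (Y : space) (TY : is_topology Y).

Definition min_list (cs : list (Y -> R)) (y : Y) : R := fold_right (fun c m => Rmin (c y) m) 1 cs.

Lemma contR_min_list (cs : list (Y -> R)) : (forall c, In c cs -> contR c) -> contR (min_list cs).
Proof.
  induction cs as [|c cs IH]; intros Hcs.
  - exact (contR_const Y TY 1).
  - apply (contR_min Y TY c (min_list cs)); [apply Hcs; simpl; auto|].
    apply IH; intros; apply Hcs; simpl; auto.
Qed.

Lemma min_list_le (cs : list (Y -> R)) (c : Y -> R) (y : Y) : In c cs -> min_list cs y <= c y.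
Proof.
  induction cs as [|c' cs IH]; simpl; [tauto|].
  intros [<-|Hc]; [apply Rmin_l|]. pose proof (Rmin_r (c' y) (min_list cs y)). specialize (IH Hc).
  unfold min_list in *; lra.
Qed.

Lemma min_list_eq_1 (cs : list (Y -> R)) (y : Y) :
  (forall c, In c cs -> c y = 1) -> min_list cs y = 1.
Proof.
  induction cs as [|c cs IH]; simpl; intros Hcs; auto.
  change (Rmin (c y) (min_list cs y) = 1).
  rewrite IH, Hcs by (simpl; auto). apply Rmin_left; lra.
Qed.

Lemma cutoff (A C : Y -> Prop) :
  completely_regular Y -> compact (subspace Y A) -> closed C -> (forall y, A y -> ~ C y) ->
  exists (psi : Y -> R) (N : Y -> Prop), contR psi /\ opens N /\ (forall y, A y -> N y) /\
    (forall y, N y -> psi y = 0) /\ (forall y, C y -> psi y = 1).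
Proof.
  intros CR HA HC HAC.
  destruct (choice (fun (s : {a | A a}) (f : Y -> R) =>
              contR f /\ f (proj1_sig s) = 0 /\ forall y, C y -> f y = 1)) as [f Hf].
  { intros [a Ha]. exact (CR C a HC (HAC a Ha)). }
  set (c := fun s y => Rmin 1 (Rabs (f s y))).
  assert (Hc : forall s, contR (c s)).
  { intro s. apply contR_min; auto; [apply contR_const; auto|apply contR_abs, Hf; auto]. }
  assert (Hc0 : forall s, c s (proj1_sig s) = 0).
  { intro s; unfold c. rewrite (proj1 (proj2 (Hf s))), Rabs_R0. apply Rmin_right; lra. }
  assert (Hc1 : forall s y, C y -> c s y = 1).
  { intros s y Hy; unfold c. rewrite (proj2 (proj2 (Hf s)) y Hy), Rabs_R1. apply Rmin_left; lra. }
  destruct (HA _ (fun s t => c s (proj1_sig t) < 1/2)) as [l Hl].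
  - intro s. exists (fun y => c s y < 1/2); split; [exact (Hc s _ (opens_lt _))|tauto].
  - intro t. exists t. rewrite Hc0; lra.
  - set (m := min_list (map c l)).
    exists (fun y => Rmax 0 (2 * m y - 1)), (fun y => exists s, In s l /\ c s y < 1/2).
    repeat split.
    + apply contR_max; auto; [apply contR_const; auto|].
      apply contR_minus; auto; [|apply contR_const; auto]. apply contR_scale; auto.
      apply contR_min_list. intros c' Hc'. apply in_map_iff in Hc' as [s [<- _]]. apply Hc.
    + apply opens_Exists_list; auto. intros s _. exact (Hc s _ (opens_lt _)).
    + intros y Hy. destruct (Hl (exist _ y Hy)) as [s [Hs Hsy]]. exists s; auto.
    + intros y [s [Hs Hsy]]. pose proof (min_list_le (map c l) (c s) y (in_map c l s Hs)).
      apply Rmax_left. unfold m. lra.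
    + intros y Hy. unfold m. rewrite min_list_eq_1; [rewrite Rmax_right; lra|].
      intros c' Hc'. apply in_map_iff in Hc' as [s [<- _]]. auto.
Qed.

End Cutoff.

Definition lift {X Y : space} (e : X -> Y) (f : X -> R) (y : Y) : R :=
  match excluded_middle_informative (image e y) with
  | left H => f (proj1_sig (constructive_indefinite_description _ H))
  | right _ => 0
  end.

Lemma lift_image {X Y : space} (e : X -> Y) (f : X -> R) (x : X) :
  (forall x1 x2, e x1 = e x2 -> x1 = x2) -> lift e f (e x) = f x.
Proof.
  intros Hinj. unfold lift. destruct excluded_middle_informative as [H|H].
  - destruct constructive_indefinite_description as [x' E]; simpl. rewrite (Hinj _ _ E); auto.
  - exfalso; apply H; exists x; auto.
Qed.

Lemma contR_glue (X Y : space) (e : X -> Y) (g : Y -> R) (N : Y -> Prop) :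
  is_topology Y -> initial e -> opens (image e) -> opens N -> (forall y, image e y \/ N y) ->
  contR (fun x => g (e x)) -> (forall y, N y -> g y = 0) -> contR g.
Proof.
  intros TY He HX HN Hcov Hge HgN V HV. apply opens_local; auto. intros y Vy.
  destruct (Hcov y) as [[x ->]|Ny].
  - destruct (He _ (Hge V HV)) as [O [HO EO]].
    exists (fun y' => O y' /\ image e y'); repeat split; auto.
    + apply opens_and; auto.
    + apply EO, Vy.
    + exists x; auto.
    + intros y' [Oy' [x' ->]]. apply EO, Oy'.
  - exists N; repeat split; auto. intros y' Ny'. rewrite (HgN y' Ny'), <- (HgN y Ny). exact Vy.
Qed.

(* [g] is [f] times a cutoff vanishing near the compact remainder, glued with [0] there;
   [X] is open in [Y] because the remainder is compact. *)
Lemma extend_away_from_remainder (X Y Z : space) (eY : X -> Y) (eZ : Y -> Z) (f : X -> R) (z : Z) :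
  is_topology X -> tychonoff Y -> extension X Y eY -> compact_remainder X Y eY ->
  compactification Y Z eZ -> contR f -> (forall y, ~ image eY y -> eZ y <> z) ->
  exists (g : Y -> R) (W : Z -> Prop),
    contR g /\ opens W /\ W z /\ forall x, W (eZ (eY x)) -> g (eY x) = f x.
Proof.
  intros TX [TY [HausY CRY]] [_ [[InjY [CeY IY]] _]] HK [[TZ [[_ [CeZ _]] _]] [_ HausZ]] Hf Hz.
  destruct (separate_point_compact Y Z eZ (fun y => ~ image eY y) z TZ HausZ CeZ HK Hz)
    as [W1 [W2 [HW1 [HW2 [W1z [HKW2 Hdis]]]]]].
  destruct (cutoff Y TY (fun y => ~ image eY y) (fun y => ~ W2 (eZ y)) CRY HK)
    as [psi [N [Hpsi [HN [HKN [HN0 HC1]]]]]].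
  { apply (opens_ext Y (fun y => W2 (eZ y))); [apply CeZ, HW2|intro; tauto]. }
  { intros y Hy Hn; exact (Hn (HKW2 y Hy)). }
  exists (fun y => psi y * lift eY f y), W1. repeat split; auto.
  - apply (contR_glue X Y eY _ N TY IY); auto.
    + apply image_open_of_compact_remainder; auto.
    + intro y; destruct (classic (image eY y)); auto.
    + apply (contR_ext X (fun x => psi (eY x) * f x)).
      * apply contR_mult; auto. exact (continuous_comp _ _ _ _ _ CeY Hpsi).
      * intro x. rewrite lift_image; auto.
    + intros y Ny; rewrite HN0; [ring|auto].
  - intros x Wx. rewrite lift_image, HC1; [ring| |exact InjY].
    intro H2; exact (Hdis _ (conj Wx H2)).
Qed.

Section Hewitt.
Variables (X Y Z B : space) (eY : X -> Y) (eZ : Y -> Z) (eb : X -> B) (phi : B -> Z).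
Hypotheses (TX : is_topology X) (HY : tychonoff Y) (HeY : extension X Y eY)
  (HK : compact_remainder X Y eY) (HZ : compactification Y Z eZ) (HS : stone_cech X B eb)
  (Hphi : continuous phi) (Hpe : forall x, phi (eb x) = eZ (eY x)).

Lemma realcompact_hewitt_pt (q : B) :
  realcompact Y -> hewitt_pt X B eb q -> exists y, phi q = eZ y.
Proof.
  intros [I [h [[_ [Hhc Hhi]] Hcl]]] Hq.
  destruct HeY as [_ [[_ [CeY _]] _]]. destruct HZ as [[_ [[_ [CeZ _]] _]] [_ HausZ]].
  destruct HS as [[[TB [_ DB]] _] _].
  assert (Ht : forall i, exists t, @tends _ _ R_space eb (fun x => h (eY x) i) q t).
  { intro i. apply extends_over_tends, Hq.
    exact (continuous_comp _ _ _ _ _ CeY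
             (continuous_comp _ _ _ h _ Hhc (R_power_proj_continuous I i))). }
  destruct (choice _ Ht) as [r Hr].
  assert (Hc : clusters eb (fun x => h (eY x)) q r).
  { apply clusters_of_tends; auto. apply tends_R_power; auto. }
  assert (Hhr : image h r).
  { apply (closure_closed (R_power I)); [exact Hcl|]. intros V HV Vr.
    destruct (Hc _ V (opens_True B TB) HV Logic.I Vr) as [x [_ Vx]].
    exists (h (eY x)); split; [exact Vx|exists (eY x); reflexivity]. }
  destruct Hhr as [y ->]. exists y.
  apply (clusters_unique h eZ y (phi q) HausZ CeZ Hhi), clusters_sym.
  exact (clusters_push X Y Z B _ eY eZ eb phi h q (h y) Hphi Hpe Hc).
Qed.

Lemma realcompact_cl_remainder (p : B) :
  realcompact Y -> closure (fun q => hewitt_pt X B eb q /\ ~ image eb q) p ->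
  exists y, ~ image eY y /\ phi p = eZ y.
Proof.
  intros HR Hp. apply NNPP; intro Hn.
  pose proof HeY as [_ [[_ [_ IY]] _]]. pose proof HZ as [[TZ [[_ [CeZ IZ]] _]] [_ HausZ]].
  destruct (separate_point_compact Y Z eZ (fun y => ~ image eY y) (phi p) TZ HausZ CeZ HK)
    as [W1 [W2 [HW1 [HW2 [W1p [HKW2 Hdis]]]]]].
  { intros y Hy E; apply Hn; eauto. }
  destruct (Hp (fun b => W1 (phi b)) (Hphi _ HW1) W1p) as [q [W1q [Hqh Hqb]]].
  destruct (realcompact_hewitt_pt q HR Hqh) as [y Ey].
  destruct (classic (image eY y)) as [[x0 ->]|Hy].
  - exact (Hqb (ex_intro _ x0 (compactification_map_fiber X Y Z B eY eZ eb phi q x0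
                                  IY IZ HS Hphi Hpe Ey))).
  - apply (Hdis (phi q)); split; auto. rewrite Ey; auto.
Qed.

Lemma evaluation_image_closed :
  (forall p, closure (fun q => hewitt_pt X B eb q /\ ~ image eb q) p ->
     exists y, ~ image eY y /\ phi p = eZ y) ->
  closed (image (evaluation Y)).
Proof.
  intros Hcond.
  pose proof HY as HY'; destruct HY' as [TY _].
  pose proof HeY as [_ [_ DY]]. pose proof HZ as [[_ [[_ [_ IZ]] _]] _].
  pose proof HS as [[[TB _] [CompB _]] _].
  pose proof (evaluation_embedding Y HY) as [_ [Hev _]].
  apply closed_of_closure; [apply R_power_top|]. intros r Hr.
  destruct (closure_image_cluster X Y B _ eY eb (evaluation Y) r (R_power_top _) CompB DY Hev Hr)
    as [q Hq].
  destruct (classic (exists y, phi q = eZ y)) as [[y Ey]|Hno].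
  { exists y. apply (clusters_unique eZ (evaluation Y) y r (R_power_hausdorff _) Hev IZ).
    rewrite <- Ey. exact (clusters_push X Y Z B _ eY eZ eb phi _ q r Hphi Hpe Hq). }
  exfalso.
  assert (Hqb : ~ image eb q) by (intros [x ->]; apply Hno; exists (eY x); auto).
  assert (Hqh : ~ hewitt_pt X B eb q).
  { intro Hh. destruct (Hcond q (closure_of B _ q (conj Hh Hqb))) as [y [_ Ey]]. eauto. }
  apply not_all_ex_not in Hqh as [f Hf]. apply imply_to_and in Hf as [Hfc Hfn].
  destruct (extend_away_from_remainder X Y Z eY eZ f (phi q) TX HY HeY HK HZ Hfc)
    as [g [W1 [Hg [HW1 [W1q Hgf]]]]].
  { intros y _ E; apply Hno; eauto. }
  set (i := exist _ g Hg : cont_funs Y).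
  destruct (not_extends_over_unbounded X B eb f q HS TX Hfc Hfn (Rabs (r i) + 1))
    as [W [HW [Wq HWf]]].
  destruct (Hq (fun b => W b /\ W1 (phi b)) (fun v => Rabs (v i - r i) < 1))
    as [x [[Wx W1x] Hx]].
  - apply opens_and; auto.
  - exact (contR_ball _ _ _ _ (R_power_proj_continuous _ i)).
  - split; auto.
  - apply Rabs_center; lra.
  - specialize (HWf x Wx). rewrite Hpe in W1x. unfold evaluation in Hx; simpl in Hx.
    rewrite Hgf in Hx by auto.
    pose proof (Rabs_triang (f x - r i) (r i)) as Htri.
    replace (f x - r i + r i) with (f x) in Htri by (unfold R_space in *; simpl in *; ring).
    lra.
Qed.

End Hewitt.

Theorem lemma3p2 (X Y Z B : space) (eY : X -> Y) (eZ : Y -> Z) (eb : X -> B)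
  (phi : B -> Z) :
  tychonoff X -> tychonoff Y ->
  extension X Y eY -> compact_remainder X Y eY ->
  compactification Y Z eZ ->
  stone_cech X B eb ->
  continuous phi -> (forall x, phi (eb x) = eZ (eY x)) ->
  (realcompact Y <->
   forall p : B,
     closure (fun q => hewitt_pt X B eb q /\ ~ image eb q) p ->
     exists y : Y, ~ image eY y /\ phi p = eZ y).
Proof.
  intros [TX _] HY HeY HK HZ HS Hphi Hpe. split.
  - intros HR p. exact (realcompact_cl_remainder X Y Z B eY eZ eb phi HeY HK HZ HS Hphi Hpe p HR).
  - intro Hcond. exists (cont_funs Y), (evaluation Y). split.
    + exact (evaluation_embedding Y HY).
    + exact (evaluation_image_closed X Y Z B eY eZ eb phi TX HY HeY HK HZ HS Hphi Hpe Hcond).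
Qed.
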